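(* Let $N_1$ and $N_2$ be phylogenetic networks on the same set $S$ of taxa. Then $m(N_1,N_2)\ge d_\mu(N_1,N_2)$.
   Context: A phylogenetic network on $S=\{1,\dots,n\}$ is a finite rooted directed acyclic graph whose leaves are bijectively labeled by $S$. For a node $v$, $\mu(v)=(m_1(v),\dots,m_n(v))$ where $m_i(v)$ is the number of directed paths from $v$ to leaf $i$; $\mu(N)$ is the multiset $\{\mu(v)\}$ over all nodes, and $d_\mu(N_1,N_2)=\frac12|\mu(N_1)\bigtriangleup\mu(N_2)|$. The nested label $\ell(v)$ is defined by induction on height: $\ell(v)=\{i\}$ for the leaf labeled $i$, otherwise the multiset of nested labels of the children of $v$; $\Upsilon(N)$ is the multiset of nested labels of all nodes, and $m(N_1,N_2)=\frac12|\Upsilon(N_1)\bigtriangleup\Upsilon(N_2)|$. Here $\bigtriangleup$ is multiset symmetric difference (multiplicity $|M_1(x)-M_2(x)|$) and $|\cdot|$ is the sum of multiplicities. *)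

From mathcomp Require Import all_boot all_order all_algebra.
Set Implicit Arguments. Unset Strict Implicit. Unset Printing Implicit Defensive.
Import Order.TTheory GRing.Theory Num.Theory.

(* A phylogenetic network on S = {0,...,n-1} (0-based version of {1..n}):
   a finite directed graph (V, e), acyclic, with a root from which every
   node is reachable, whose leaves (nodes without out-edges) are bijectively
   labeled by 'I_n through lab. *)

Definition is_leaf (V : finType) (e : rel V) (v : V) : bool :=
  ~~ [exists w, e v w].

Definition acyclic (V : finType) (e : rel V) : Prop :=
  forall (v : V) (p : seq V), path e v p -> last v p = v -> p = [::].

Definition phylo_network (n : nat) (V : finType) (e : rel V) (lab : 'I_n -> V)
  : Prop :=
  [/\ acyclic e,
      exists r : V, forall v : V, connect e r v,
      injective lab &
      forall v : V, is_leaf e v <-> exists i, lab i = v].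

(* number of directed paths from v to w (a path of k edges is a k-tuple of
   successive nodes; in an acyclic graph every path has < #|V| edges) *)
Definition npaths (V : finType) (e : rel V) (v w : V) : nat :=
  \sum_(k < #|V|) #|[set p : k.-tuple V | path e v p && (last v p == w)]|.

Definition mu (n : nat) (V : finType) (e : rel V) (lab : 'I_n -> V) (v : V)
  : {ffun 'I_n -> nat} := [ffun i => npaths e v (lab i)].

Definition muN (n : nat) (V : finType) (e : rel V) (lab : 'I_n -> V)
  : seq {ffun 'I_n -> nat} := [seq mu e lab v | v <- enum V].

(* A nested label is a finite multiset whose elements are
   nested labels, or a leaf label {i}.  We represent them in GenTree.tree nat:
   GenTree.Leaf i stands for {i}, GenTree.Node 0 s for the multiset of the
   elements of s, with s kept in a canonical (sorted) order so that equality
   of representations is equality of multisets. *)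
Definition nlabel := GenTree.tree nat.

Definition nl_le (a b : nlabel) : bool := (pickle a <= pickle b)%N.

Definition children (V : finType) (e : rel V) (v : V) : seq V :=
  [seq w <- enum V | e v w].

Fixpoint nl_fuel (n : nat) (V : finType) (e : rel V) (lab : 'I_n -> V)
  (k : nat) (v : V) : nlabel :=
  match k with
  | 0 => GenTree.Node 0 [::]
  | k'.+1 =>
      if is_leaf e v then
        GenTree.Leaf (if [pick i | lab i == v] is Some i then nat_of_ord i else 0)
      else GenTree.Node 0 (sort nl_le [seq @nl_fuel n V e lab k' w | w <- children e v])
  end.

(* nested label ell(v), defined by induction on the height of v; fuel #|V|
   exceeds the height of every node in an acyclic graph *)
Definition nested_label (n : nat) (V : finType) (e : rel V) (lab : 'I_n -> V)
  (v : V) : nlabel := nl_fuel e lab #|V| v.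

Definition Upsilon (n : nat) (V : finType) (e : rel V) (lab : 'I_n -> V)
  : seq nlabel := [seq nested_label e lab v | v <- enum V].

Definition msymdiff_size (T : eqType) (s1 s2 : seq T) : nat :=
  \sum_(x <- undup (s1 ++ s2))
     ((count_mem x s1 - count_mem x s2) + (count_mem x s2 - count_mem x s1)).

Definition d_mu (n : nat) (V1 V2 : finType) (e1 : rel V1) (e2 : rel V2)
  (lab1 : 'I_n -> V1) (lab2 : 'I_n -> V2) : rat :=
  ((msymdiff_size (muN e1 lab1) (muN e2 lab2))%:R / 2)%R.

Definition m_dist (n : nat) (V1 V2 : finType) (e1 : rel V1) (e2 : rel V2)
  (lab1 : 'I_n -> V1) (lab2 : 'I_n -> V2) : rat :=
  ((msymdiff_size (Upsilon e1 lab1) (Upsilon e2 lab2))%:R / 2)%R.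

From mathcomp Require Import all_boot all_order all_algebra.
Set Implicit Arguments. Unset Strict Implicit. Unset Printing Implicit Defensive.
Import GRing.Theory Num.Theory IntDist.

(* Let [leaf_mult i t] count the occurrences of the leaf label {i} in a nested
   label t, with the multiplicities of all the nested multisets.  It satisfies
   the recursion of the path counts: it is 1 at the leaf i, 0 at other leaves,
   and additive over the children.  Hence the vector of these counts for l(v)
   is mu(v), i.e. mu(N) is the image of Upsilon(N) under one fixed map, and
   the image of two multisets under a map has a symmetric difference no larger
   than theirs. *)

Lemma subnDsubnC_distn (a b : nat) : ((a - b) + (b - a))%N = `|a - b|.
Proof.
case: (leqP a b) => [ab | /ltnW ba]; first by rewrite distnEr // (eqP ab).
by rewrite distnEl // (eqP ba) addn0.
Qed.

Lemma leq_distD (a b c d : nat) : `|a + c - (b + d)| <= `|a - b| + `|c - d|.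
Proof.
by apply: leq_trans (leqD_dist _ (b + c) _) _; rewrite distnDr distnDl.
Qed.

Lemma leq_dist_sum (T : Type) (r : seq T) (P : pred T) (a b : T -> nat) :
  `|\sum_(x <- r | P x) a x - \sum_(x <- r | P x) b x| <=
  \sum_(x <- r | P x) `|a x - b x|.
Proof.
elim/big_rec3: _ => [|x u v w _ IH]; first by rewrite distnn.
exact: leq_trans (leq_distD _ _ _ _) (leq_add (leqnn _) IH).
Qed.

Lemma count_big_count_mem (T : eqType) (u s : seq T) (P : pred T) :
  uniq u -> {subset s <= u} ->
  count P s = \sum_(x <- u | P x) count_mem x s.
Proof.
move=> Uu; elim: s => [|y s IH] sub_su /=; first by rewrite big1.
rewrite IH => [|z zs]; last by apply: sub_su; rewrite inE zs orbT.
rewrite big_split /= -big_mkcondr /= sum1_count; congr (_ + _)%N.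
have yu : y \in u by apply: sub_su; rewrite mem_head.
case Py: (P y).
  rewrite (eq_count (a2 := pred1 y)) ?count_uniq_mem ?yu // => z /=.
  by case: (eqVneq y z) => [<-|]; rewrite ?Py ?andbF.
rewrite (eq_count (a2 := pred0)) ?count_pred0 // => z /=.
by case: (eqVneq y z) => [<-|]; rewrite ?Py ?andbF.
Qed.

Lemma msymdiff_size_map (T U : eqType) (G : T -> U) (s1 s2 : seq T) :
  msymdiff_size (map G s1) (map G s2) <= msymdiff_size s1 s2.
Proof.
rewrite /msymdiff_size; set u := undup (s1 ++ s2); set w := undup _.
have sub_s1 : {subset s1 <= u} by move=> x xs; rewrite mem_undup mem_cat xs.
have sub_s2 : {subset s2 <= u} by move=> x xs; rewrite mem_undup mem_cat xs orbT.
have count_map_mem s y : {subset s <= u} ->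
    count_mem y (map G s) = \sum_(x <- u | G x == y) count_mem x s.
  by move=> sub; rewrite count_map; apply: count_big_count_mem (undup_uniq _) sub.
under eq_bigr => y _ do
  rewrite subnDsubnC_distn (count_map_mem _ _ sub_s1) (count_map_mem _ _ sub_s2).
under [X in _ <= X]eq_bigr => x _ do rewrite subnDsubnC_distn.
apply: leq_trans (leq_sum w (fun y _ => leq_dist_sum u (fun x => G x == y) _ _)) _.
rewrite (exchange_big_dep xpredT) //= big_seq [X in _ <= X]big_seq.
apply/eq_leq/eq_bigr => x xu; rewrite big_const_seq.
have Gxw : G x \in w by rewrite mem_undup -map_cat map_f // -mem_undup.
have -> : count (eq_op (G x)) w = 1%N.
  by rewrite (eq_count (a2 := pred1 (G x))) ?count_uniq_mem ?Gxw ?undup_uniq.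
by rewrite /= addn0.
Qed.

Section PathCounts.

Variables (V : finType) (e : rel V).

Definition npaths_len (k : nat) (v w : V) : nat :=
  #|[set p : k.-tuple V | path e v p && (last v p == w)]|.

Lemma npaths_len0 (v w : V) : npaths_len 0 v w = (v == w).
Proof.
rewrite /npaths_len; case: eqP => [<-|vw].
  rewrite (_ : [set p | _] = setT) ?cardsT ?card_tuple //.
  by apply/setP => p; rewrite !inE tuple0 /= eqxx.
rewrite (_ : [set p | _] = set0) ?cards0 //.
by apply/setP => p; rewrite !inE tuple0 /=; apply/eqP.
Qed.

Lemma npaths_lenS (k : nat) (v w : V) :
  npaths_len k.+1 v w = \sum_(c | e v c) npaths_len k c w.
Proof.
rewrite /npaths_len.
pose B := [set cq : V * k.-tuple V |
            e v cq.1 && path e cq.1 cq.2 && (last cq.1 cq.2 == w)].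
have -> : [set p : k.+1.-tuple V | path e v p && (last v p == w)] =
          (fun cq : V * k.-tuple V => [tuple of cq.1 :: cq.2]) @: B.
  apply/setP => p; rewrite inE; apply/idP/imsetP => [pP|[[c q] cqB ->]].
    exists (thead p, [tuple of behead p]); last exact: tuple_eta.
    by rewrite inE; rewrite [p]tuple_eta /= in pP.
  by rewrite inE in cqB.
rewrite card_imset => [|[c q] [c' q'] /(congr1 val) [-> /val_inj ->] //].
have -> : #|B| = \sum_c \sum_(q | (c, q) \in B) 1.
  by rewrite pair_big_dep -sum1_card; apply: eq_bigl => -[c q].
rewrite (bigID (e v)) /= [X in (_ + X)%N]big1 => [|c].
  rewrite addn0; apply: eq_bigr => c evc; rewrite -sum1_card.
  by apply: eq_bigl => q; rewrite !inE /= evc.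
by move/negbTE => evc; apply: big1 => q; rewrite inE /= evc.
Qed.

Hypothesis acyclic_e : acyclic e.

Lemma path_notin (v : V) (p : seq V) : path e v p -> v \notin p.
Proof.
move=> vp; apply/negP => vinp; case/splitPr: vinp vp => p1 p2.
rewrite cat_path /= => /and3P[vp1 p1v _].
have := @acyclic_e v (rcons p1 v); rewrite rcons_path vp1 p1v last_rcons.
by move=> /(_ isT erefl); case: p1 {vp1 p1v}.
Qed.

Lemma path_uniq (v : V) (p : seq V) : path e v p -> uniq (v :: p).
Proof.
elim: p v => [|x p IH] v // vp; rewrite [uniq _]/= path_notin //.
by case/andP: vp => _ /IH.
Qed.

Lemma path_size (v : V) (p : seq V) : path e v p -> size p < #|V|.
Proof.
move=> /path_uniq /card_uniqP /= card_vp.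
by have := max_card (mem (v :: p)); rewrite card_vp.
Qed.

Lemma npaths_len_card (v w : V) : npaths_len #|V| v w = 0.
Proof.
apply/eqP; rewrite cards_eq0; apply/eqP/setP => p; rewrite !inE.
by apply/negbTE/negP => /andP[/path_size]; rewrite size_tuple ltnn.
Qed.

Lemma npathsE (v w : V) :
  npaths e v w = ((v == w) + \sum_(c | e v c) npaths e c w)%N.
Proof.
transitivity (\sum_(0 <= k < #|V|.+1) npaths_len k v w).
  by rewrite big_nat_recr //= npaths_len_card addn0 big_mkord.
rewrite big_nat_recl // npaths_len0; congr (_ + _)%N.
under eq_bigr do rewrite npaths_lenS.
by rewrite exchange_big; apply: eq_bigr => c _; rewrite big_mkord.
Qed.

End PathCounts.

Fixpoint leaf_mult (n : nat) (i : 'I_n) (t : nlabel) : nat :=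
  match t with
  | GenTree.Leaf a => (i == a :> nat)
  | GenTree.Node _ s => sumn (map (leaf_mult i) s)
  end.

Definition leaf_profile (n : nat) (t : nlabel) : {ffun 'I_n -> nat} :=
  [ffun i => leaf_mult i t].

Section NestedLabels.

Variables (n : nat) (V : finType) (e : rel V) (lab : 'I_n -> V).
Hypothesis N : phylo_network e lab.

Lemma leaf_mult_nl_fuel (k : nat) (v : V) (i : 'I_n) :
  (forall p, path e v p -> size p < k) ->
  leaf_mult i (nl_fuel e lab k v) = npaths e v (lab i).
Proof.
case: N => ac _ lab_inj leafP; elim: k v => [|k IH] v vk.
  by have := vk [::] isT.
rewrite /= npathsE //; case: ifP => v_leaf.
  have [j lab_j] := (leafP v).1 v_leaf; subst v.
  have -> : [pick i0 | lab i0 == lab j] = Some j.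
    by case: pickP => [i0 /eqP/lab_inj -> | /(_ j)]; rewrite ?eqxx.
  move: v_leaf; rewrite /is_leaf => /existsPn no_child.
  by rewrite (inj_eq lab_inj) eq_sym big_pred0 ?addn0 // => c; apply/negbTE.
have -> : (v == lab i) = false.
  by apply/negbTE/eqP => vi; rewrite (leafP v).2 in v_leaf; last by exists i.
rewrite /= (perm_sumn (perm_map _ (permEl (perm_sort _ _)))) -map_comp.
have -> : map (leaf_mult i \o nl_fuel e lab k) (children e v) =
          map (fun c => npaths e c (lab i)) (children e v).
  apply/eq_in_map => c; rewrite mem_filter => /andP[evc _]; apply: IH => p cp.
  by have := vk (c :: p); rewrite /= evc cp; apply.
by rewrite sumnE big_map big_filter big_enum_cond.
Qed.

Lemma muN_Upsilon : muN e lab = map (@leaf_profile n) (Upsilon e lab).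
Proof.
rewrite /muN /Upsilon -map_comp; apply: eq_map => v /=.
apply/ffunP => i; rewrite !ffunE leaf_mult_nl_fuel //.
by case: N => ac _ _ _ p /(path_size ac).
Qed.

End NestedLabels.

Local Open Scope ring_scope.

Theorem proposition5 (n : nat) (V1 V2 : finType) (e1 : rel V1) (e2 : rel V2)
  (lab1 : 'I_n -> V1) (lab2 : 'I_n -> V2) :
  phylo_network e1 lab1 -> phylo_network e2 lab2 ->
  d_mu e1 e2 lab1 lab2 <= m_dist e1 e2 lab1 lab2.
Proof.
move=> N1 N2; rewrite /d_mu /m_dist (muN_Upsilon N1) (muN_Upsilon N2).
by rewrite ler_pM2r ?invr_gt0 ?ltr0n // ler_nat msymdiff_size_map.
Qed.
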